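(* Let $A$ be a Banach lattice algebra with identity and let $a\in A$. Then the ideal generated by $a$ (the intersection of all ideals of $A$ containing $a$) equals \[\{x\in A: |x|\le r|a|r'\ \text{for some } r,r'\in A_+\}.\]
   Context: A Banach lattice algebra is a real Banach lattice $A$ with an associative bilinear product making it a Banach algebra such that $xy\ge0$ whenever $x,y\ge0$; identity means a multiplicative identity of norm one. An ideal of $A$ is a linear subspace $I$ that is both an order ideal (if $|x|\le|y|$ and $y\in I$ then $x\in I$) and a two-sided algebraic ideal ($zx,xz\in I$ for all $z\in A$, $x\in I$). *)

From HB Require Import structures.
From mathcomp Require Import all_boot all_order all_algebra.
From mathcomp Require Import Rstruct.
Set Implicit Arguments. Unset Strict Implicit. Unset Printing Implicit Defensive.
Import Order.TTheory GRing.Theory Num.Theory.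
Local Open Scope ring_scope.

Notation Real := Rdefinitions.R.

Record BLAlg := {
  bla_car :> lmodType Real;
  bla_le : bla_car -> bla_car -> Prop;
  bla_sup : bla_car -> bla_car -> bla_car;
  bla_norm : bla_car -> Real;
  bla_mul : bla_car -> bla_car -> bla_car;
  bla_one : bla_car;
  bla_le_refl : forall x, bla_le x x;
  bla_le_anti : forall x y, bla_le x y -> bla_le y x -> x = y;
  bla_le_trans : forall x y z, bla_le x y -> bla_le y z -> bla_le x z;
  bla_le_add : forall x y z, bla_le x y -> bla_le (x + z) (y + z);
  bla_le_scale : forall (c : Real) x y, 0 <= c -> bla_le x y -> bla_le (c *: x) (c *: y);
  bla_sup_l : forall x y, bla_le x (bla_sup x y);
  bla_sup_r : forall x y, bla_le y (bla_sup x y);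
  bla_sup_least : forall x y z, bla_le x z -> bla_le y z -> bla_le (bla_sup x y) z;
  bla_norm_ge0 : forall x, 0 <= bla_norm x;
  bla_norm_eq0 : forall x, bla_norm x = 0 -> x = 0;
  bla_normZ : forall (c : Real) x, bla_norm (c *: x) = `|c| * bla_norm x;
  bla_normD : forall x y, bla_norm (x + y) <= bla_norm x + bla_norm y;
  bla_norm_lattice : forall x y,
    bla_le (bla_sup x (- x)) (bla_sup y (- y)) -> bla_norm x <= bla_norm y;
  bla_complete : forall u : nat -> bla_car,
    (forall eps : Real, 0 < eps -> exists N, forall m n, (N <= m)%N -> (N <= n)%N ->
        bla_norm (u m - u n) < eps) ->
    exists l, forall eps : Real, 0 < eps -> exists N, forall n, (N <= n)%N ->
        bla_norm (u n - l) < eps;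
  bla_mulA : forall x y z, bla_mul x (bla_mul y z) = bla_mul (bla_mul x y) z;
  bla_mulDl : forall x y z, bla_mul (x + y) z = bla_mul x z + bla_mul y z;
  bla_mulDr : forall x y z, bla_mul x (y + z) = bla_mul x y + bla_mul x z;
  bla_mulZl : forall (c : Real) x y, bla_mul (c *: x) y = c *: bla_mul x y;
  bla_mulZr : forall (c : Real) x y, bla_mul x (c *: y) = c *: bla_mul x y;
  bla_norm_mul : forall x y, bla_norm (bla_mul x y) <= bla_norm x * bla_norm y;
  bla_mul_ge0 : forall x y, bla_le 0 x -> bla_le 0 y -> bla_le 0 (bla_mul x y);
  bla_mul1l : forall x, bla_mul bla_one x = x;
  bla_mul1r : forall x, bla_mul x bla_one = x;
  bla_norm_one : bla_norm bla_one = 1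
}.

Section Defs.
Variable A : BLAlg.
Local Notation V := (bla_car A).

Definition babs (x : V) : V := bla_sup x (- x).

(* ideal: linear subspace, order ideal, two-sided algebraic ideal *)
Definition is_ideal (I : V -> Prop) : Prop :=
  [/\ I 0,
      (forall x y : V, I x -> I y -> I (x + y)),
      (forall (c : Real) (x : V), I x -> I (c *: x)),
      (forall x y : V, bla_le (babs x) (babs y) -> I y -> I x) &
      (forall z x : V, I x -> I (bla_mul z x) /\ I (bla_mul x z))].

Definition gen_ideal (a : V) : V -> Prop :=
  fun x => forall I, is_ideal I -> I a -> I x.
End Defs.

(* The set D of all x with |x| <= r |a| r' for some r, r' >= 0 is itself an
   ideal: it is closed under sums because the sandwich r |a| r' is monotone in
   r and r', under scalars and order domination trivially, and under products
   with z because |z x| <= |z| |x|. It contains a since |a| <= |1| |a| |1|.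
   Conversely every ideal containing a contains |a|, hence every r |a| r', and
   hence, being solid, every element of D. *)
From mathcomp Require Import all_boot all_order all_algebra.
From mathcomp Require Import Rstruct.
Set Implicit Arguments. Unset Strict Implicit. Unset Printing Implicit Defensive.
Import Order.TTheory GRing.Theory Num.Theory.
Local Open Scope ring_scope.

Lemma cross_cancelB (V : zmodType) (p q r s : V) :
  (p - r) + (s - q) + ((p + r) - (s + q)) = (p - q) *+ 2.
Proof.
by rewrite opprD addrACA (addrACA p) addNr addr0 (addrACA s) subrr add0r mulr2n addrACA.
Qed.

Lemma cross_cancelD (V : zmodType) (p q r s : V) :
  (p + r) + (s + q) + ((p - r) - (s - q)) = (p + q) *+ 2.
Proof.
by rewrite opprB addrACA (addrACA p) subrr addr0 [q - s]addrC (addrACA s) subrr add0r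
  mulr2n addrACA.
Qed.

Section BanachLatticeAlgebra.
Variable A : BLAlg.
Local Notation V := (bla_car A).
Local Notation le := (@bla_le A).
Local Notation mul := (@bla_mul A).

Lemma bla_le_addl (x y z : V) : le x y -> le (z + x) (z + y).
Proof. by move=> lexy; rewrite ![z + _]addrC; apply: bla_le_add. Qed.

Lemma bla_le_add2 (x y z w : V) : le x y -> le z w -> le (x + z) (y + w).
Proof. by move=> lexy lezw; apply: bla_le_trans (bla_le_add z lexy) (bla_le_addl y lezw). Qed.

Lemma bla_subr_ge0 (x y : V) : le x y <-> le 0 (y - x).
Proof.
split=> h; first by have := bla_le_add (- x) h; rewrite subrr.
by have := bla_le_add x h; rewrite add0r subrK.
Qed.

Lemma bla_addr_ge0 (x y : V) : le 0 x -> le 0 y -> le 0 (x + y).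
Proof. by move=> x0 y0; have := bla_le_add2 x0 y0; rewrite addr0. Qed.

Lemma bla_le_addr_ge0 (u v : V) : le 0 v -> le u (u + v).
Proof. by move=> v0; have := bla_le_addl u v0; rewrite addr0. Qed.

Lemma bla_le_addl_ge0 (u v : V) : le 0 u -> le v (u + v).
Proof. by move=> u0; have := bla_le_add v u0; rewrite add0r. Qed.

Lemma bla_scale_ge0 (c : Real) (x : V) : 0 <= c -> le 0 x -> le 0 (c *: x).
Proof. by move=> c0 x0; have := bla_le_scale c0 x0; rewrite scaler0. Qed.

Lemma bla_muln2_ge0 (v : V) : le 0 (v *+ 2) -> le 0 v.
Proof.
move=> v2_ge0; have := bla_le_scale (c := 2^-1) _ v2_ge0.
rewrite scaler0 -scaler_nat scalerA mulVf ?pnatr_eq0 // scale1r.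
by apply; rewrite invr_ge0 ler0n.
Qed.

Lemma le_babs (x : V) : le x (babs x).
Proof. exact: bla_sup_l. Qed.

Lemma le_opp_babs (x : V) : le (- x) (babs x).
Proof. exact: bla_sup_r. Qed.

Lemma babs_le (x y : V) : le x y -> le (- x) y -> le (babs x) y.
Proof. exact: bla_sup_least. Qed.

Lemma babs_ge0 (x : V) : le 0 (babs x).
Proof.
apply: bla_muln2_ge0; rewrite mulr2n -(subrr x).
exact: bla_le_add2 (le_babs x) (le_opp_babs x).
Qed.

Lemma ger0_babs (y : V) : le 0 y -> babs y = y.
Proof.
move=> y0; apply: bla_le_anti _ (le_babs y); apply: babs_le (bla_le_refl y) _.
by have := bla_le_add (- y) y0; rewrite add0r subrr => /bla_le_trans; apply.
Qed.

Lemma babs_add (x y : V) : le (babs (x + y)) (babs x + babs y).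
Proof.
apply: babs_le; first exact: bla_le_add2 (le_babs x) (le_babs y).
by rewrite opprD; apply: bla_le_add2 (le_opp_babs x) (le_opp_babs y).
Qed.

Lemma babs_scale (c : Real) (x : V) : le (babs (c *: x)) (`|c| *: babs x).
Proof.
have [c0 | c_lt0] := lerP 0 c.
  rewrite ger0_norm //; apply: babs_le; first exact: bla_le_scale (le_babs x).
  by rewrite -scalerN; apply: bla_le_scale (le_opp_babs x).
have Nc0 : 0 <= - c by rewrite oppr_ge0 ltW.
rewrite ltr0_norm //; apply: babs_le; last by rewrite -scaleNr; apply: bla_le_scale (le_babs x).
by rewrite -[c *: x]opprK -scaleNr -scalerN; apply: bla_le_scale (le_opp_babs x).
Qed.

Lemma bla_mulrN (x y : V) : mul x (- y) = - mul x y.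
Proof. by rewrite -scaleN1r bla_mulZr scaleN1r. Qed.

Lemma bla_mulNr (x y : V) : mul (- x) y = - mul x y.
Proof. by rewrite -scaleN1r bla_mulZl scaleN1r. Qed.

Lemma bla_mulrB (z x y : V) : mul z (y - x) = mul z y - mul z x.
Proof. by rewrite bla_mulDr bla_mulrN. Qed.

Lemma bla_mulBr (z x y : V) : mul (y - x) z = mul y z - mul x z.
Proof. by rewrite bla_mulDl bla_mulNr. Qed.

Lemma bla_mulr0 (x : V) : mul x 0 = 0.
Proof. by have := bla_mulZr 0 x 0; rewrite !scale0r. Qed.

Lemma bla_le_mul2l (z x y : V) : le 0 z -> le x y -> le (mul z x) (mul z y).
Proof.
by move=> z0 /bla_subr_ge0 lexy; apply/bla_subr_ge0; rewrite -bla_mulrB; apply: bla_mul_ge0.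
Qed.

Lemma bla_le_mul2r (z x y : V) : le 0 z -> le x y -> le (mul x z) (mul y z).
Proof.
by move=> z0 /bla_subr_ge0 lexy; apply/bla_subr_ge0; rewrite -bla_mulBr; apply: bla_mul_ge0.
Qed.

Lemma bla_le_sandwich (c r r' s s' : V) : le 0 c -> le 0 r' -> le 0 s ->
  le r s -> le r' s' -> le (mul (mul r c) r') (mul (mul s c) s').
Proof.
move=> c0 r'0 s0 lers ler's'.
apply: bla_le_trans (bla_le_mul2r r'0 (bla_le_mul2r c0 lers)) _.
by apply: bla_le_mul2l ler's'; apply: bla_mul_ge0.
Qed.

(* The unit is not assumed positive, so [1] is dominated by [|1|] instead. *)
Lemma le_babs1_sandwich (c : V) :
  le 0 c -> le c (mul (mul (babs (bla_one A)) c) (babs (bla_one A))).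
Proof.
move=> c0; have le1 := le_babs (bla_one A).
apply: (@bla_le_trans _ _ (mul c (babs (bla_one A)))).
  by rewrite -{1}[c]bla_mul1r; apply: bla_le_mul2l.
by rewrite -{1}[c]bla_mul1l; apply: bla_le_mul2r (babs_ge0 _) (bla_le_mul2r c0 le1).
Qed.

(* |z||x| -+ z x is half of (|z| +- z)(|x| -+ x) + (|z| -+ z)(|x| +- x),
   a sum of products of positive elements. *)
Lemma babs_mul (z x : V) : le (babs (mul z x)) (mul (babs z) (babs x)).
Proof.
have pos_plus (y : V) : le 0 (babs y + y).
  by have /bla_subr_ge0 := le_opp_babs y; rewrite opprK.
have pos_minus (y : V) : le 0 (babs y - y) := (bla_subr_ge0 _ _).1 (le_babs y).
apply: babs_le; apply/bla_subr_ge0; rewrite ?opprK; apply: bla_muln2_ge0.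
  rewrite -(cross_cancelB _ _ (mul (babs z) x) (mul z (babs x))).
  apply: bla_addr_ge0.
    by have := bla_mul_ge0 (pos_plus z) (pos_minus x); rewrite bla_mulDl !bla_mulrB.
  by have := bla_mul_ge0 (pos_minus z) (pos_plus x); rewrite bla_mulBr !bla_mulDr.
rewrite -(cross_cancelD _ _ (mul (babs z) x) (mul z (babs x))).
apply: bla_addr_ge0.
  by have := bla_mul_ge0 (pos_plus z) (pos_plus x); rewrite bla_mulDl !bla_mulDr.
by have := bla_mul_ge0 (pos_minus z) (pos_minus x); rewrite bla_mulBr !bla_mulrB.
Qed.

Variable a : V.

Definition sandwich_dominated (x : V) : Prop :=
  exists r r' : V, le 0 r /\ le 0 r' /\ le (babs x) (mul (mul r (babs a)) r').

Lemma sandwich_dominated_self : sandwich_dominated a.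
Proof.
by exists (babs (bla_one A)), (babs (bla_one A));
  do ![split; first exact: babs_ge0]; apply: le_babs1_sandwich; apply: babs_ge0.
Qed.

Lemma sandwich_dominatedD (x y : V) :
  sandwich_dominated x -> sandwich_dominated y -> sandwich_dominated (x + y).
Proof.
move=> [r1 [r1' [r1_ge0 [r1'_ge0 hx]]]] [r2 [r2' [r2_ge0 [r2'_ge0 hy]]]].
have s_ge0 := bla_addr_ge0 r1_ge0 r2_ge0; have s'_ge0 := bla_addr_ge0 r1'_ge0 r2'_ge0.
exists (2 *: (r1 + r2)), (r1' + r2'); split; first exact: bla_scale_ge0 (ler0n _ 2) s_ge0.
split=> //; rewrite bla_mulZl bla_mulZl scaler_nat mulr2n.
apply: bla_le_trans (babs_add x y) (bla_le_add2 _ _).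
  apply: bla_le_trans hx (bla_le_sandwich (babs_ge0 a) r1'_ge0 s_ge0 _ _);
  exact: bla_le_addr_ge0.
apply: bla_le_trans hy (bla_le_sandwich (babs_ge0 a) r2'_ge0 s_ge0 _ _);
exact: bla_le_addl_ge0.
Qed.

Lemma sandwich_dominatedZ (c : Real) (x : V) :
  sandwich_dominated x -> sandwich_dominated (c *: x).
Proof.
move=> [r [r' [r_ge0 [r'_ge0 hx]]]]; exists (`|c| *: r), r'.
split; first exact: bla_scale_ge0 (normr_ge0 c) r_ge0.
split=> //; rewrite !bla_mulZl.
exact: bla_le_trans (babs_scale c x) (bla_le_scale (normr_ge0 c) hx).
Qed.

Lemma sandwich_dominated_le (x y : V) :
  le (babs x) (babs y) -> sandwich_dominated y -> sandwich_dominated x.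
Proof.
move=> lexy [r [r' [r_ge0 [r'_ge0 hy]]]]; exists r, r'.
by do 2 split=> //; apply: bla_le_trans hy.
Qed.

Lemma sandwich_dominatedMl (z x : V) : sandwich_dominated x -> sandwich_dominated (mul z x).
Proof.
move=> [r [r' [r_ge0 [r'_ge0 hx]]]]; exists (mul (babs z) r), r'.
split; first exact: bla_mul_ge0 (babs_ge0 z) r_ge0.
split=> //; rewrite -!bla_mulA; rewrite -bla_mulA in hx.
exact: bla_le_trans (babs_mul z x) (bla_le_mul2l (babs_ge0 z) hx).
Qed.

Lemma sandwich_dominatedMr (z x : V) : sandwich_dominated x -> sandwich_dominated (mul x z).
Proof.
move=> [r [r' [r_ge0 [r'_ge0 hx]]]]; exists r, (mul r' (babs z)).
split=> //; split; first exact: bla_mul_ge0 r'_ge0 (babs_ge0 z).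
rewrite bla_mulA; exact: bla_le_trans (babs_mul x z) (bla_le_mul2r (babs_ge0 z) hx).
Qed.

Lemma sandwich_dominated_ideal : is_ideal sandwich_dominated.
Proof.
split.
- by exists 0, 0; rewrite ger0_babs ?bla_mulr0; do ?split; apply: bla_le_refl.
- exact: sandwich_dominatedD.
- exact: sandwich_dominatedZ.
- exact: sandwich_dominated_le.
- by move=> z x hx; split; [apply: sandwich_dominatedMl | apply: sandwich_dominatedMr].
Qed.

Lemma ideal_sandwich_dominated (I : V -> Prop) (x : V) :
  is_ideal I -> I a -> sandwich_dominated x -> I x.
Proof.
move=> [_ _ _ I_solid I_mul] Ia [r [r' [_ [_ hx]]]].
have Iabs : I (babs a).
  by apply: I_solid Ia; rewrite (ger0_babs (babs_ge0 a)); apply: bla_le_refl.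
have Isw : I (mul (mul r (babs a)) r') by apply: (I_mul r' _ (I_mul r _ Iabs).1).2.
by apply: I_solid Isw; apply: bla_le_trans hx (le_babs _).
Qed.

End BanachLatticeAlgebra.

Theorem mainTheorem9 (A : BLAlg) (a : bla_car A) :
  forall x : bla_car A, gen_ideal a x <->
    exists r r' : bla_car A, bla_le 0 r /\ bla_le 0 r' /\
      bla_le (babs x) (bla_mul (bla_mul r (babs a)) r').
Proof.
move=> x; split=> [gen_x | dom_x I I_ideal Ia].
  exact: gen_x (sandwich_dominated_ideal a) (sandwich_dominated_self a).
exact: ideal_sandwich_dominated I_ideal Ia dom_x.
Qed.
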